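(* Let $\boldsymbol{\beta}=(\beta_1,\dots,\beta_p)$ be an alternate base and $\delta=\prod_{i=1}^p\beta_i$. Suppose there exists $\gamma>0$ such that every rational number in $[0,\gamma)$ has an eventually periodic $\boldsymbol{\beta}$-expansion. Then $\delta$ is an algebraic integer.
   Context: An alternate base is a $p$-tuple $\boldsymbol{\beta}=(\beta_1,\dots,\beta_p)$ of reals $\beta_i>1$, identified with the purely periodic sequence $(\beta_k)_{k\ge1}$, $\beta_{k+p}=\beta_k$. For $x\in[0,1)$ the $\boldsymbol{\beta}$-expansion $d_{\boldsymbol{\beta}}(x)=a_1a_2\cdots$ is given by the greedy algorithm $r_0=x$, $a_{k+1}=\lfloor\beta_{k+1}r_k\rfloor$, $r_{k+1}=\beta_{k+1}r_k-a_{k+1}$, so $x=\sum_{k\ge1}a_k/\prod_{i=1}^k\beta_i$. *)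

From Stdlib Require Import Reals ZArith List Lia.
Open Scope R_scope.

(* An alternate base of length p is given by beta : nat -> R, where
   beta i (0 <= i < p) is beta_{i+1}.  The periodic extension:
   bseq beta p k = beta_{k+1} (0-indexed), i.e. beta (k mod p). *)
Definition bseq (beta : nat -> R) (p k : nat) : R := beta (k mod p)%nat.

Definition is_alternate_base (beta : nat -> R) (p : nat) : Prop :=
  (1 <= p)%nat /\ forall i, (i < p)%nat -> 1 < beta i.

Fixpoint rem_seq (beta : nat -> R) (p : nat) (x : R) (k : nat) : R :=
  match k with
  | O => x
  | S k' => let y := bseq beta p k' * rem_seq beta p x k' in
            y - IZR (Int_part y)
  end.

(* Digits: digit k = a_{k+1} = floor(beta_{k+1} r_k). *)
Definition digit (beta : nat -> R) (p : nat) (x : R) (k : nat) : Z :=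
  Int_part (bseq beta p k * rem_seq beta p x k).

Definition eventually_periodic (a : nat -> Z) : Prop :=
  exists N P : nat, (0 < P)%nat /\ forall n, (N <= n)%nat -> a (n + P)%nat = a n.

Definition is_rational (x : R) : Prop :=
  exists (m : Z) (n : Z), (0 < n)%Z /\ x = IZR m / IZR n.

Fixpoint prod_beta (beta : nat -> R) (n : nat) : R :=
  match n with
  | O => 1
  | S n' => prod_beta beta n' * beta n'
  end.

Fixpoint zpoly_eval (c : list Z) (x : R) : R :=
  match c with
  | nil => 0
  | a :: c' => IZR a + x * zpoly_eval c' x
  end.

(* x is an algebraic integer: root of a monic polynomial with integer coeffs,
   X^n + c_{n-1} X^{n-1} + ... + c_0. *)
Definition algebraic_integer (x : R) : Prop :=
  exists c : list Z, zpoly_eval (c ++ 1%Z :: nil) x = 0.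

From Stdlib Require Import Reals ZArith List Lia Lra.
From Stdlib Require Import IndefiniteDescription.
Open Scope R_scope.

(* Let delta = beta_1 ... beta_p.  Grouping the greedy algorithm into blocks of p steps gives
   r_((j+1)p) = delta r_(jp) - sum_t a_(jp+t+1) beta_(t+2) ... beta_p.
   If the digits of x are eventually periodic, so are its remainders (two remainders with the
   same subsequent digits differ by a quantity multiplied by some beta_i > 1 at every step, and
   remainders lie in [0,1)), hence the block remainders r_(jp)(x) take finitely many values.
   Small rationals whose expansion is 0 except for a single digit 1 at position K p + t + 1 show
   that every tail product beta_(t+2) ... beta_p is an integer combination of block remainders.
   So the Z-module spanned by the block remainders of finitely many rationals is stable under
   multiplication by delta: delta is an eigenvalue of an integer matrix, hence an algebraic
   integer. *)

Fixpoint sumR (f : nat -> R) (n : nat) : R :=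
  match n with O => 0 | S n' => sumR f n' + f n' end.

Lemma sumR_ext f g n : (forall t, (t < n)%nat -> f t = g t) -> sumR f n = sumR g n.
Proof.
  induction n as [|n IH]; intros H; simpl; auto.
  rewrite IH by (intros; apply H; lia). rewrite H by lia. reflexivity.
Qed.

Lemma sumR_scal c f n : sumR (fun t => c * f t) n = c * sumR f n.
Proof. induction n; simpl; [ring | rewrite IHn; ring]. Qed.

Lemma sumR_plus f g n : sumR (fun t => f t + g t) n = sumR f n + sumR g n.
Proof. induction n; simpl; [ring | rewrite IHn; ring]. Qed.

Lemma sumR_const0 n : sumR (fun _ => 0) n = 0.
Proof. induction n; simpl; [ring | rewrite IHn; ring]. Qed.

Lemma sumR_indicator f n j : (j < n)%nat ->
  sumR (fun t => IZR (if Nat.eq_dec t j then 1%Z else 0%Z) * f t) n = f j.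
Proof.
  induction n as [|n IH]; intros H; [lia|]. simpl.
  destruct (Nat.eq_dec n j) as [->|E].
  - rewrite (sumR_ext _ (fun _ => 0)), sumR_const0; [ring|].
    intros t Ht. destruct (Nat.eq_dec t j); [lia | simpl; ring].
  - rewrite IH by lia. simpl. ring.
Qed.

Lemma prod_beta_ext f g n :
  (forall i, (i < n)%nat -> f i = g i) -> prod_beta f n = prod_beta g n.
Proof.
  induction n as [|n IH]; intros H; simpl; auto.
  rewrite IH by (intros; apply H; lia). rewrite H by lia. reflexivity.
Qed.

Lemma prod_beta_add f k1 k2 :
  prod_beta f (k1 + k2) = prod_beta f k1 * prod_beta (fun i => f (k1 + i)%nat) k2.
Proof.
  induction k2 as [|k2 IH]; simpl.
  - rewrite Nat.add_0_r. ring.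
  - rewrite Nat.add_succ_r. simpl. rewrite IH. ring.
Qed.

Lemma prod_beta_ge1 f n : (forall i, (i < n)%nat -> 1 <= f i) -> 1 <= prod_beta f n.
Proof.
  induction n as [|n IH]; intros H; simpl; [lra|].
  assert (1 <= prod_beta f n) by (apply IH; intros; apply H; lia).
  assert (1 <= f n) by (apply H; lia). nra.
Qed.

Lemma expanding_bounded_zero (e m : nat -> R) (c : R) : 1 < c ->
  (forall k, c <= m k) -> (forall k, e (S k) = m k * e k) ->
  (forall k, Rabs (e k) < 1) -> e 0%nat = 0.
Proof.
  intros Hc Hm He Hb.
  assert (Hgrow : forall k, c ^ k * Rabs (e 0%nat) <= Rabs (e k)).
  { induction k as [|k IH]; simpl; [lra|].
    rewrite He, Rabs_mult, (Rabs_right (m k)) by (specialize (Hm k); lra).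
    rewrite Rmult_assoc. apply Rmult_le_compat; auto; try lra.
    apply Rmult_le_pos; [apply pow_le; lra | apply Rabs_pos]. }
  destruct (Req_dec (e 0%nat) 0) as [E|E]; auto. exfalso.
  assert (Hpos : 0 < Rabs (e 0%nat)) by (apply Rabs_pos_lt; auto).
  destruct (Pow_x_infinity c ltac:(rewrite Rabs_right; lra) (2 / Rabs (e 0%nat))) as [k Hk].
  specialize (Hk k (le_n k)). rewrite Rabs_right in Hk by (apply Rle_ge, pow_le; lra).
  specialize (Hgrow k). specialize (Hb k).
  assert (2 / Rabs (e 0%nat) * Rabs (e 0%nat) <= c ^ k * Rabs (e 0%nat))
    by (apply Rmult_le_compat_r; lra).
  field_simplify in H; lra.
Qed.

Inductive zspan (G : list R) : R -> Prop :=
| zspan0 : zspan G 0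
| zspan_gen g : In g G -> zspan G g
| zspanD u v : zspan G u -> zspan G v -> zspan G (u + v)
| zspanN u : zspan G u -> zspan G (- u).

Lemma zspanB G u v : zspan G u -> zspan G v -> zspan G (u - v).
Proof. intros. apply zspanD; [|apply zspanN]; auto. Qed.

Lemma zspan_natmul G n u : zspan G u -> zspan G (INR n * u).
Proof.
  intros H. induction n as [|n IH].
  - rewrite Rmult_0_l. apply zspan0.
  - rewrite S_INR, Rmult_plus_distr_r, Rmult_1_l. apply zspanD; auto.
Qed.

Lemma zspan_zmul G z u : zspan G u -> zspan G (IZR z * u).
Proof.
  intros H. destruct z as [|q|q].
  - rewrite Rmult_0_l. apply zspan0.
  - rewrite <- positive_nat_Z, <- INR_IZR_INZ. apply zspan_natmul; auto.
  - rewrite <- Pos2Z.opp_pos, opp_IZR, <- positive_nat_Z, <- INR_IZR_INZ,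
      Ropp_mult_distr_l_reverse.
    apply zspanN, zspan_natmul; auto.
Qed.

Lemma zspan_sumR G f n : (forall t, (t < n)%nat -> zspan G (f t)) -> zspan G (sumR f n).
Proof. induction n; intros H; simpl; [apply zspan0 | apply zspanD; auto]. Qed.

Lemma zspan_coeffs G v : zspan G v ->
  exists c : nat -> Z, v = sumR (fun j => IZR (c j) * nth j G 0) (length G).
Proof.
  induction 1 as [|g Hg|u v _ [c1 E1] _ [c2 E2]|u _ [c E]].
  - exists (fun _ => 0%Z). rewrite (sumR_ext _ (fun _ => 0)), sumR_const0; auto.
    intros. ring.
  - destruct (In_nth G g 0 Hg) as [j [Hj <-]].
    exists (fun t => if Nat.eq_dec t j then 1%Z else 0%Z). rewrite sumR_indicator; auto.
  - exists (fun j => (c1 j + c2 j)%Z). rewrite E1, E2, <- sumR_plus.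
    apply sumR_ext. intros. rewrite plus_IZR. ring.
  - exists (fun j => (- c j)%Z).
    rewrite E, <- (Rmult_1_l (sumR _ _)), Ropp_mult_distr_l, <- sumR_scal.
    apply sumR_ext. intros. rewrite opp_IZR. ring.
Qed.

Lemma zspan_stable_coeffs G d : (forall g, In g G -> zspan G (d * g)) ->
  exists C : nat -> nat -> Z, forall i, (i < length G)%nat ->
    d * nth i G 0 = sumR (fun j => IZR (C i j) * nth j G 0) (length G).
Proof.
  intros H.
  assert (Hrow : forall i, exists c : nat -> Z, (i < length G)%nat ->
    d * nth i G 0 = sumR (fun j => IZR (c j) * nth j G 0) (length G)).
  { intros i. destruct (Nat.lt_ge_cases i (length G)) as [Hi|Hi].
    - destruct (zspan_coeffs G (d * nth i G 0)) as [c E]; [apply H, nth_In; auto|].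
      exists c. auto.
    - exists (fun _ => 0%Z). lia. }
  exists (fun i => proj1_sig (constructive_indefinite_description _ (Hrow i))).
  intros i. exact (proj2_sig (constructive_indefinite_description _ (Hrow i))).
Qed.

Definition range_list (f : nat -> R) (L : list R) : Prop :=
  (forall j, In (f j) L) /\ (forall g, In g L -> exists j, g = f j).

Lemma range_list_union (s : R -> nat -> R) (ys : list R) :
  (forall y, In y ys -> exists L, range_list (s y) L) ->
  exists G, (forall y, In y ys -> forall j, In (s y j) G) /\
            (forall g, In g G -> exists y j, In y ys /\ g = s y j).
Proof.
  induction ys as [|y0 ys IH]; intros H.
  - exists nil. split; [intros y [] | intros g []].
  - destruct (H y0 (or_introl eq_refl)) as [L [HL1 HL2]].
    destruct IH as [G [HG1 HG2]]; [intros; apply H; right; auto|].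
    exists (L ++ G). split.
    + intros y [<-|Hy] j; apply in_or_app; auto.
    + intros g Hg. apply in_app_or in Hg. destruct Hg as [Hg|Hg].
      * destruct (HL2 g Hg) as [j E]. exists y0, j. split; [left|]; auto.
      * destruct (HG2 g Hg) as [y [j [Hy E]]]. exists y, j. split; [right|]; auto.
Qed.

Lemma exists_test_scale (d c g : R) : 1 < d -> 1 < c -> 0 < g ->
  exists (K : nat) (l : Z), 0 < IZR l /\ / d ^ K + / IZR l < g /\
    d ^ S K * / IZR l < 1 /\ d ^ S K * / IZR l < c - 1.
Proof.
  intros Hd Hc Hg.
  destruct (Pow_x_infinity d ltac:(rewrite Rabs_right; lra) (2 / g)) as [K HK].
  specialize (HK K (le_n K)). rewrite Rabs_right in HK by (apply Rle_ge, pow_le; lra).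
  set (D := d ^ S K).
  assert (HD : 0 < D) by (apply pow_lt; lra).
  assert (H2g : 0 < 2 / g) by (apply Rdiv_lt_0_compat; lra).
  assert (HDc : 0 < D / (c - 1)) by (apply Rdiv_lt_0_compat; lra).
  destruct (archimed (D / (c - 1) + D + 2 / g)) as [Hl _].
  exists K, (up (D / (c - 1) + D + 2 / g)).
  fold D. set (l := IZR (up _)) in *.
  assert (Hl0 : 0 < l) by lra.
  split; [exact Hl0|]. split; [|split].
  - assert (/ d ^ K <= g / 2).
    { replace (g / 2) with (/ (2 / g)) by (field; lra). apply Rinv_le_contravar; lra. }
    assert (/ l < g / 2).
    { replace (g / 2) with (/ (2 / g)) by (field; lra).
      apply Rinv_lt_contravar; [apply Rmult_lt_0_compat|]; lra. }
    lra.
  - apply Rmult_lt_reg_r with l; auto. rewrite Rmult_assoc, Rinv_l by lra. lra.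
  - apply Rmult_lt_reg_r with l; auto. rewrite Rmult_assoc, Rinv_l by lra.
    assert ((c - 1) * (D / (c - 1)) = D) by (field; lra). nra.
Qed.

Lemma up_div_bounds (l : Z) (theta : R) : 0 < IZR l ->
  theta < IZR (up (IZR l * theta)) / IZR l <= theta + / IZR l.
Proof.
  intros Hl. destruct (archimed (IZR l * theta)) as [H1 H2]. unfold Rdiv. split.
  - apply Rmult_lt_reg_r with (IZR l); auto. rewrite Rmult_assoc, Rinv_l by lra. lra.
  - apply Rmult_le_reg_r with (IZR l); auto.
    rewrite Rmult_assoc, Rinv_l, Rmult_plus_distr_r, Rinv_l by lra. lra.
Qed.

Lemma test_point_digit_bounds (A w D u x c bt : R) : 1 <= A -> 1 <= w -> w * A = D ->
  c <= bt -> D * u < 1 -> D * u < c - 1 -> / A < x <= / A + u ->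
  1 <= A * x /\ A * x < 2 /\ A * x < bt /\ w * (A * x - 1) < 1.
Proof.
  intros HA Hw HD Hc Hu1 Hu2 [Hx1 Hx2].
  assert (HAx1 : 1 < A * x).
  { apply Rmult_lt_compat_l with (r := A) in Hx1; [|lra]. rewrite Rinv_r in Hx1; lra. }
  assert (HAx2 : A * x <= 1 + A * u).
  { apply Rmult_le_compat_l with (r := A) in Hx2; [|lra].
    rewrite Rmult_plus_distr_l, Rinv_r in Hx2; lra. }
  assert (Hu : 0 < u) by (assert (0 < / A) by (apply Rinv_0_lt_compat; lra); lra).
  assert (w * (A * u) = D * u) by (rewrite <- HD; ring).
  assert (A * u <= w * (A * u)) by nra.
  assert (w * (A * x - 1) <= w * (A * u)) by (apply Rmult_le_compat_l; lra).
  repeat split; lra.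
Qed.

Section AlternateBase.
Variable beta : nat -> R.
Variable p : nat.
Hypothesis Hbase : is_alternate_base beta p.

Notation b := (bseq beta p).
Notation r x := (rem_seq beta p x).
Notation a x := (digit beta p x).
Notation delta := (prod_beta beta p).
Notation bprod n k := (prod_beta (fun i => b (n + i)%nat) k).
(* beta_tail t is beta_(t+2) ... beta_p in the 1-based indexing of the paper. *)
Notation beta_tail t := (prod_beta (fun i => beta (S t + i)%nat) (p - S t)).

Lemma period_pos : (1 <= p)%nat.
Proof. apply Hbase. Qed.

Lemma beta_gt1 i : (i < p)%nat -> 1 < beta i.
Proof. apply Hbase. Qed.

Lemma bseq_gt1 k : 1 < b k.
Proof. apply beta_gt1, Nat.mod_upper_bound. pose proof period_pos. lia. Qed.

Lemma bseq_lower_bound : exists c, 1 < c /\ forall k, c <= b k.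
Proof.
  assert (Hmin : forall n, exists c, 1 < c /\ forall i, (i < n)%nat -> (i < p)%nat -> c <= beta i).
  { induction n as [|n [c [Hc1 Hc2]]].
    - exists 2. split; [lra | intros; lia].
    - destruct (Nat.lt_ge_cases n p) as [Hn|Hn].
      + exists (Rmin c (beta n)). split; [apply Rmin_glb_lt; auto using beta_gt1|].
        intros i Hi Hip. destruct (Nat.eq_dec i n) as [->|E]; [apply Rmin_r|].
        eapply Rle_trans; [apply Rmin_l | apply Hc2; lia].
      + exists c. split; auto. intros i Hi Hip. apply Hc2; lia. }
  destruct (Hmin p) as [c [Hc1 Hc2]]. exists c. split; auto.
  intros k. pose proof period_pos. apply Hc2; apply Nat.mod_upper_bound; lia.
Qed.

Lemma delta_gt1 : 1 < delta.
Proof.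
  pose proof period_pos. replace p with (S (p - 1)) at 1 by lia. simpl.
  assert (1 <= prod_beta beta (p - 1)).
  { apply prod_beta_ge1. intros i Hi. left. apply beta_gt1. lia. }
  assert (1 < beta (p - 1)) by (apply beta_gt1; lia). nra.
Qed.

Lemma bseq_block j s : (s < p)%nat -> b (j * p + s) = beta s.
Proof.
  intros H. unfold bseq. rewrite Nat.add_comm, Nat.Div0.mod_add, Nat.mod_small; auto.
Qed.

Lemma bprod_block j s k : (s + k <= p)%nat ->
  bprod (j * p + s) k = prod_beta (fun i => beta (s + i)%nat) k.
Proof.
  intros H. apply prod_beta_ext. intros i Hi.
  rewrite <- Nat.add_assoc, bseq_block by lia. reflexivity.
Qed.

Lemma bprod_blocks j : bprod 0 (j * p) = delta ^ j.
Proof.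
  induction j as [|j IH]; [reflexivity|].
  assert (Elast : prod_beta (fun i => b (0 + (j * p + i))) p = delta)
    by (apply prod_beta_ext; intros; apply bseq_block; auto).
  rewrite Nat.mul_succ_l, prod_beta_add, IH. cbv beta. rewrite Elast. simpl. ring.
Qed.

Lemma tail_head_prod t : (t < p)%nat -> beta_tail t * prod_beta beta (S t) = delta.
Proof.
  intros H. replace p with (S t + (p - S t))%nat at 2 by lia.
  rewrite prod_beta_add. ring.
Qed.

Lemma rem_S x k : r x (S k) = b k * r x k - IZR (a x k).
Proof. reflexivity. Qed.

Lemma rem_bounds x k : 0 <= x < 1 -> 0 <= r x k < 1.
Proof.
  intros H. destruct k as [|k]; [exact H|].
  rewrite rem_S. unfold digit. destruct (base_Int_part (b k * r x k)). lra.
Qed.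

(* While the remainder times the remaining product of bases stays below 1, all digits are 0. *)
Lemma rem_scale x n k : 0 <= r x n -> bprod n k * r x n < 1 ->
  r x (n + k) = bprod n k * r x n.
Proof.
  intros H0. induction k as [|k IH]; intros H.
  - simpl. rewrite Nat.add_0_r. ring.
  - simpl in H. pose proof (bseq_gt1 (n + k)).
    assert (1 <= bprod n k) by (apply prod_beta_ge1; intros; left; apply bseq_gt1).
    assert (Hk : bprod n k * r x n < 1) by nra.
    rewrite Nat.add_succ_r, rem_S. unfold digit. rewrite (IH Hk).
    rewrite <- (Int_part_spec _ 0); simpl; [ring|].
    split; [lra|]. apply Rmult_le_pos; [lra | apply Rmult_le_pos; lra].
Qed.

Lemma rem_block x j k : (k <= p)%nat ->
  r x (j * p + k) = prod_beta beta k * r x (j * p)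
     - sumR (fun t => IZR (a x (j * p + t))
                      * prod_beta (fun i => beta (S t + i)%nat) (k - S t)) k.
Proof.
  induction k as [|k IH]; intros Hk.
  - simpl. rewrite Nat.add_0_r. ring.
  - rewrite Nat.add_succ_r, rem_S, IH, bseq_block by lia.
    simpl sumR.
    rewrite (sumR_ext
      (fun t => IZR (a x (j * p + t)) * prod_beta (fun i => beta (S t + i)%nat) (S k - S t))
      (fun t => beta k * (IZR (a x (j * p + t))
                          * prod_beta (fun i => beta (S t + i)%nat) (k - S t)))).
    + rewrite sumR_scal, Nat.sub_diag. simpl. ring.
    + intros t Ht. replace (S k - S t)%nat with (S (k - S t)) by lia. simpl.
      replace (S (t + (k - S t))) with k by lia. ring.
Qed.

Lemma rem_next_block x j : r x (S j * p) = delta * r x (j * p)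
  - sumR (fun t => IZR (a x (j * p + t)) * beta_tail t) p.
Proof. replace (S j * p)%nat with (j * p + p)%nat by lia. apply rem_block. lia. Qed.

Lemma rem_period x N P : 0 <= x < 1 -> (0 < P)%nat ->
  (forall n, (N <= n)%nat -> a x (n + P) = a x n) ->
  forall n, (N <= n)%nat -> r x (n + P * p) = r x n.
Proof.
  intros Hx HP Ha.
  assert (Hmult : forall i n, (N <= n)%nat -> a x (n + i * P) = a x n).
  { induction i as [|i IH]; intros n Hn; simpl; [now rewrite Nat.add_0_r|].
    replace (n + (P + i * P))%nat with (n + i * P + P)%nat by lia.
    rewrite Ha by lia. auto. }
  intros n Hn. destruct bseq_lower_bound as [c [Hc1 Hc2]].
  set (e := fun k => r x (n + k + P * p) - r x (n + k)).
  assert (He : forall k, e (S k) = b (n + k) * e k).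
  { intros k. unfold e.
    replace (n + S k + P * p)%nat with (S (n + k + P * p)) by lia.
    replace (n + S k)%nat with (S (n + k)) by lia.
    rewrite !rem_S. unfold bseq at 1. rewrite Nat.Div0.mod_add. fold (b (n + k)).
    rewrite (Nat.mul_comm P p), Hmult by lia. ring. }
  assert (Hbd : forall k, Rabs (e k) < 1).
  { intros k. unfold e. pose proof (rem_bounds x (n + k + P * p) Hx).
    pose proof (rem_bounds x (n + k) Hx). apply Rabs_def1; lra. }
  pose proof (expanding_bounded_zero e (fun k => b (n + k)) c Hc1 (fun k => Hc2 _) He Hbd) as E.
  unfold e in E. rewrite !Nat.add_0_r in E. lra.
Qed.

Lemma block_remainders_finite x : 0 <= x < 1 -> eventually_periodic (a x) ->
  exists L, range_list (fun j => r x (j * p)) L.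
Proof.
  intros Hx [N [P [HP Ha]]]. pose proof period_pos.
  assert (Hshift : forall j, (N <= j)%nat -> r x ((j + P) * p) = r x (j * p)).
  { intros j Hj. rewrite Nat.mul_add_distr_r. apply (rem_period x N P Hx HP Ha). nia. }
  assert (Hfold : forall j, exists j', (j' < N + P)%nat /\ r x (j * p) = r x (j' * p)).
  { intros j. induction j as [j IH] using (well_founded_induction lt_wf).
    destruct (Nat.lt_ge_cases j (N + P)) as [Hj|Hj]; [exists j; auto|].
    destruct (IH (j - P)%nat ltac:(lia)) as [j' [H1 H2]]. exists j'. split; auto.
    rewrite <- H2, <- (Hshift (j - P)%nat) by lia. f_equal. f_equal. lia. }
  exists (map (fun j => r x (j * p)) (seq 0 (N + P))). split.
  - intros j. destruct (Hfold j) as [j' [H1 ->]].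
    apply (in_map (fun j => r x (j * p))), in_seq. lia.
  - intros g Hg. apply in_map_iff in Hg. destruct Hg as [j [<- _]]. exists j; auto.
Qed.

Lemma rem_blocks_small x j : 0 <= x -> delta ^ j * x < 1 -> r x (j * p) = delta ^ j * x.
Proof.
  intros H0 H1. pose proof (rem_scale x 0 (j * p) H0) as E.
  rewrite bprod_blocks in E. apply E, H1.
Qed.

(* The digits of x with index below K p + t vanish, digit K p + t is 1, and the following
   ones up to index (K+1) p vanish again. *)
Lemma rem_test_point K t x : (t < p)%nat -> 0 <= x ->
  let A := delta ^ K * prod_beta beta (S t) in
  1 <= A * x -> A * x < 2 -> A * x < beta t -> beta_tail t * (A * x - 1) < 1 ->
  r x (S K * p) = delta ^ S K * x - beta_tail t.
Proof.
  intros Ht Hx A H1 H2 H3 H4.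
  assert (Hhead : bprod 0 (K * p + t) = delta ^ K * prod_beta beta t).
  { assert (Ehead : prod_beta (fun i => b (0 + (K * p + i))) t = prod_beta beta t)
      by (apply prod_beta_ext; intros; apply bseq_block; lia).
    rewrite prod_beta_add, bprod_blocks. cbv beta. rewrite Ehead. reflexivity. }
  assert (Ebefore : r x (K * p + t) = delta ^ K * prod_beta beta t * x).
  { rewrite <- Hhead. apply (rem_scale x 0); auto.
    rewrite Hhead. change (r x 0) with x. unfold A in H3. simpl in H3.
    apply Rmult_lt_reg_r with (beta t); [pose proof (beta_gt1 t Ht); lra | lra]. }
  assert (Eone : r x (K * p + S t) = A * x - 1).
  { rewrite Nat.add_succ_r, rem_S. unfold digit.
    rewrite Ebefore, bseq_block by lia.
    replace (beta t * (delta ^ K * prod_beta beta t * x)) with (A * x)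
      by (unfold A; simpl; ring).
    rewrite <- (Int_part_spec _ 1); simpl; lra. }
  assert (Etail : bprod (K * p + S t) (p - S t) = beta_tail t) by (apply bprod_block; lia).
  pose proof (rem_scale x (K * p + S t) (p - S t)) as E.
  rewrite Etail, Eone in E.
  replace (K * p + S t + (p - S t))%nat with (S K * p)%nat in E by (simpl; lia).
  rewrite E by lra.
  replace (delta ^ S K * x) with (beta_tail t * (A * x))
    by (unfold A; simpl pow; rewrite <- (tail_head_prod t Ht); ring).
  ring.
Qed.

Lemma zspan_delta_mul G y j :
  (forall t, (t < p)%nat -> zspan G (beta_tail t)) -> In (r y (S j * p)) G ->
  zspan G (delta * r y (j * p)).
Proof.
  intros Htail Hnext.
  replace (delta * r y (j * p))
    with (r y (S j * p) + sumR (fun t => IZR (a y (j * p + t)) * beta_tail t) p)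
    by (rewrite rem_next_block; ring).
  apply zspanD; [apply zspan_gen; auto|].
  apply zspan_sumR. intros t Ht. apply zspan_zmul, Htail; auto.
Qed.

Lemma head_prod_ge1 t : (t < p)%nat -> 1 <= prod_beta beta (S t).
Proof. intros H. apply prod_beta_ge1. intros i Hi. left. apply beta_gt1. lia. Qed.

Lemma beta_tail_ge1 t : 1 <= beta_tail t.
Proof. apply prod_beta_ge1. intros i Hi. left. apply beta_gt1. lia. Qed.

Definition test_point (K : nat) (l : Z) (t : nat) : R :=
  IZR (up (IZR l * / (delta ^ K * prod_beta beta (S t)))) / IZR l.

Lemma test_point_range K l t : (t < p)%nat -> 0 < IZR l ->
  0 <= test_point K l t <= / delta ^ K + / IZR l.
Proof.
  intros Ht Hl. pose proof (head_prod_ge1 t Ht).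
  assert (HdK : 1 <= delta ^ K) by (apply pow_R1_Rle; pose proof delta_gt1; lra).
  assert (0 < / (delta ^ K * prod_beta beta (S t))) by (apply Rinv_0_lt_compat; nra).
  assert (/ (delta ^ K * prod_beta beta (S t)) <= / delta ^ K)
    by (apply Rinv_le_contravar; nra).
  destruct (up_div_bounds l (/ (delta ^ K * prod_beta beta (S t))) Hl).
  unfold test_point. lra.
Qed.

Lemma rem_test_point_block K l t c : (t < p)%nat -> c <= beta t -> 0 < IZR l ->
  delta ^ S K * / IZR l < 1 -> delta ^ S K * / IZR l < c - 1 ->
  r (test_point K l t) (S K * p) = delta ^ S K * test_point K l t - beta_tail t.
Proof.
  intros Ht Hc Hl HD1 HDc.
  set (A := delta ^ K * prod_beta beta (S t)).
  assert (HA : 1 <= A).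
  { pose proof (head_prod_ge1 t Ht). pose proof delta_gt1.
    assert (1 <= delta ^ K) by (apply pow_R1_Rle; lra). unfold A. nra. }
  assert (HwA : beta_tail t * A = delta ^ S K)
    by (unfold A; simpl pow; rewrite <- (tail_head_prod t Ht); ring).
  pose proof (up_div_bounds l (/ A) Hl) as Hx.
  destruct (test_point_digit_bounds A (beta_tail t) (delta ^ S K) (/ IZR l) (test_point K l t)
              c (beta t) HA (beta_tail_ge1 t) HwA Hc HD1 HDc Hx) as [B1 [B2 [B3 B4]]].
  apply rem_test_point; auto. apply test_point_range; auto.
Qed.

Lemma zspan_beta_tail G K l t c : (t < p)%nat -> c <= beta t -> 0 < IZR l ->
  delta ^ S K * / IZR l < 1 -> delta ^ S K * / IZR l < c - 1 ->
  In (r (/ IZR l) (S K * p)) G -> In (r (test_point K l t) (S K * p)) G ->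
  zspan G (beta_tail t).
Proof.
  intros Ht Hc Hl HD1 HDc Hu Hx.
  assert (Eu : r (/ IZR l) (S K * p) = delta ^ S K * / IZR l).
  { assert (0 < / IZR l) by (apply Rinv_0_lt_compat; exact Hl).
    apply rem_blocks_small; lra. }
  pose proof (rem_test_point_block K l t c Ht Hc Hl HD1 HDc) as Ex.
  replace (beta_tail t)
    with (IZR (up (IZR l * / (delta ^ K * prod_beta beta (S t)))) * r (/ IZR l) (S K * p)
          - r (test_point K l t) (S K * p))
    by (rewrite Eu, Ex; unfold test_point, Rdiv; ring).
  apply zspanB; [apply zspan_zmul|]; apply zspan_gen; auto.
Qed.

(* The test points 1/l and test_point K l t (t < p) have only finitely many block remainders,
   and the Z-module these span contains every beta_tail t. *)
Lemma delta_stable_zspan gamma : 0 < gamma ->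
  (forall x, is_rational x -> 0 <= x -> x < gamma -> eventually_periodic (a x)) ->
  exists G, (exists g, In g G /\ g <> 0) /\ forall g, In g G -> zspan G (delta * g).
Proof.
  intros Hgam Hper.
  destruct bseq_lower_bound as [c [Hc1 Hc2]].
  set (g := Rmin gamma 1).
  assert (Hg : 0 < g /\ g <= gamma /\ g <= 1)
    by (repeat split; [apply Rmin_glb_lt; lra | apply Rmin_l | apply Rmin_r]).
  destruct (exists_test_scale delta c g delta_gt1 Hc1 (proj1 Hg))
    as [K [l [Hl [Hsmall [HD1 HDc]]]]].
  assert (0 < / delta ^ K) by (apply Rinv_0_lt_compat, pow_lt; pose proof delta_gt1; lra).
  assert (0 < / IZR l) by (apply Rinv_0_lt_compat; exact Hl).
  set (ys := / IZR l :: map (test_point K l) (seq 0 p)).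
  assert (Hys : forall y, In y ys -> exists L, range_list (fun j => r y (j * p)) L).
  { intros y Hy. apply block_remainders_finite.
    - destruct Hy as [<-|Hy]; [lra|].
      apply in_map_iff in Hy. destruct Hy as [t [<- Ht]]. apply in_seq in Ht.
      pose proof (test_point_range K l t ltac:(lia) Hl). lra.
    - destruct Hy as [<-|Hy].
      + apply Hper; [exists 1%Z, l; split; [apply lt_IZR; auto | unfold Rdiv; ring] | lra | lra].
      + apply in_map_iff in Hy. destruct Hy as [t [<- Ht]]. apply in_seq in Ht.
        pose proof (test_point_range K l t ltac:(lia) Hl).
        apply Hper; [| lra | lra]. exists (up (IZR l * / (delta ^ K * prod_beta beta (S t)))), l.
        split; [apply lt_IZR; auto | reflexivity]. }
  destruct (range_list_union (fun y j => r y (j * p)) ys Hys) as [G [HG1 HG2]].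
  exists G. split.
  - exists (/ IZR l). split; [apply (HG1 _ (or_introl eq_refl) 0%nat) | lra].
  - intros g0 Hg0. destruct (HG2 g0 Hg0) as [y [j [Hy ->]]].
    apply zspan_delta_mul; auto. intros t Ht.
    apply (zspan_beta_tail G K l t c); auto.
    + rewrite <- (bseq_block 0 t Ht). apply Hc2.
    + apply HG1. left. reflexivity.
    + apply HG1. right. apply in_map, in_seq. lia.
Qed.

End AlternateBase.

From HB Require Import structures.
From mathcomp Require Import all_boot all_order all_algebra.
From mathcomp Require Import Rstruct ssrZ.
Import GRing.Theory Num.Theory.

Lemma IZR_int (z : Z) : IZR z = ((int_of_Z z)%:~R : R)%R.
Proof.
case: z => [|q|q] //=.
- by rewrite IZRposE INRE Pos_to_natE.
- have Hp := Pos2Nat.is_pos q.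
  rewrite NegzE prednK; last by apply/ltP.
  rewrite -[Z.neg q]/(Z.opp (Z.pos q)) opp_IZR RoppE.
  by rewrite IZRposE INRE Pos_to_natE mulrNz.
Qed.

Lemma zpoly_eval_Poly (s : seq int) (x : R) :
  zpoly_eval (map Z_of_int s) x = (Poly (map intr s)).[x]%R.
Proof.
elim: s => [|c s IH] /=; first by rewrite horner0.
by rewrite horner_cons IH IZR_int Z_of_intK RplusE RmultE mulrC addrC.
Qed.

Lemma sumR_big (f : nat -> R) n : sumR f n = (\sum_(j < n) f j)%R.
Proof. elim: n => [|n IH] /=; first by rewrite big_ord0. by rewrite big_ord_recr IH. Qed.

Lemma algebraic_integer_of_monic (q : {poly int}) (x : R) :
  q \is monic -> root (map_poly intr q) x -> algebraic_integer x.
Proof.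
move=> /monicP; rewrite lead_coefE /root map_polyE.
case/lastP: (polyseq q) => [//|s c] /=.
rewrite size_rcons nth_rcons ltnn eqxx => -> Hroot.
exists (map Z_of_int s).
have -> : app (map Z_of_int s) (Z.pos xH :: nil) = map Z_of_int (rcons s 1%R).
  by rewrite -cats1 map_cat.
by rewrite zpoly_eval_Poly; apply/eqP.
Qed.

(* d is an eigenvalue of the integer matrix C^T, hence a root of its monic characteristic
   polynomial. *)
Lemma algebraic_integer_of_eigenvector (n : nat) (C : nat -> nat -> Z) (y : nat -> R) (d : R) :
  (exists i, (i < n)%coq_nat /\ y i <> 0) ->
  (forall i, (i < n)%coq_nat -> d * y i = sumR (fun j => IZR (C i j) * y j) n) ->
  algebraic_integer d.
Proof.
move=> [i0 [Hi0 Hy0]] Hrel.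
pose B : 'M[int]_n := (\matrix_(i, j) int_of_Z (C j i))%R.
apply: (algebraic_integer_of_monic _ _ (char_poly_monic B)).
rewrite map_char_poly -eigenvalue_root_char.
apply/eigenvalueP; exists (\row_j y j)%R.
  apply/rowP => k; rewrite !mxE -RmultE (Hrel k (elimT ltP (ltn_ord k))) sumR_big.
  by apply: eq_bigr => j _; rewrite !mxE IZR_int RmultE mulrC.
apply/negP => /eqP /rowP /(_ (Ordinal (introT ltP Hi0))); rewrite !mxE.
exact: Hy0.
Qed.

Lemma algebraic_integer_of_stable_zspan (G : list R) (d : R) :
  (exists g, In g G /\ g <> 0) -> (forall g, In g G -> zspan G (d * g)) ->
  algebraic_integer d.
Proof.
move=> [g [Hg Hg0]] /zspan_stable_coeffs [C HC].
apply: (algebraic_integer_of_eigenvector (length G) C (fun j => List.nth j G 0) d _ HC).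
have [i [Hi Ei]] := In_nth G g 0 Hg.
by exists i; rewrite Ei.
Qed.

Theorem lemma3 (beta : nat -> R) (p : nat) :
  is_alternate_base beta p ->
  (exists gamma : R, 0 < gamma /\
     forall x : R, is_rational x -> 0 <= x -> x < gamma ->
       eventually_periodic (digit beta p x)) ->
  algebraic_integer (prod_beta beta p).
Proof.
move=> Hbase [gamma [Hgamma Hper]].
have [G [HG Hstable]] := delta_stable_zspan beta p Hbase gamma Hgamma Hper.
exact: algebraic_integer_of_stable_zspan HG Hstable.
Qed.
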